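(* Let $C$ be a kernel configuration. A model $(\mathcal M,\theta)\models T_\theta^C$ is an existentially closed model of $T^C_\theta$ if and only if for every $L(M)$-formula $\psi(\vec x)$ the following holds: if there is $(\mathcal M',\theta')\models T_\theta^C$ with $(\mathcal M,\theta)\subseteq(\mathcal M',\theta')$ and $(\mathcal M',\theta')\models\exists\underline x\in\mathbb V:\psi_\theta(\underline x)$, then $(\mathcal M,\theta)\models\exists\underline x\in\mathbb V:\psi_\theta(\underline x)$.
   Context: Setting: $L$ is a first-order language, $T$ a model-complete $L$-theory and $K$ a field. There are $L$-formulas without parameters which define, in every model $\mathcal M\models T$, a nontrivial $K$-vector space $\mathbb V=\mathbb V^{\mathcal M}$; elements of $\mathbb V$ are treated as single elements. $L_\theta=L\cup\{\theta\}$, $\theta$ a new unary function symbol; $T_\theta$ is $T$ plus axioms saying $\theta|_{\mathbb V}$ is a $K$-linear endomorphism of $\mathbb V$ and $\theta(x)=0$ for $x\notin\mathbb V$. For $\rho=\sum_i(\rho)_iX^i\in K[X]$, $\rho[\theta]:=\sum_i(\rho)_i\theta^i$, $\mathrm{Ker}(\rho)=\{v\in\mathbb V:\rho[\theta](v)=0\}$. $K[X]_{\mathrm{irr}}$ is the set of monic irreducible polynomials. A kernel configuration is a pair $C=(c,d)$ with $c:K[X]_{\mathrm{irr}}\to\mathbb N\cup\{\infty\}$, $d\in\mathbb N_{>0}\cup\{\infty\}$ such that $d=\infty$ or $d=\sum_f\deg(f)c(f)$; write $C(f)=c(f)$. $C$ is algebraic if $d<\infty$, with $\mathrm{MiPo}(C)=\prod_ff^{C(f)}$,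 and transcendental otherwise. $\theta$ is a $C$-endomorphism if $\mathrm{Ker}(\mathrm{MiPo}(C))=\mathbb V$ (algebraic case), resp. $\mathrm{Ker}(f^{C(f)})=\mathrm{Ker}(f^{C(f)+1})$ for all $f$ with $C(f)<\infty$ (transcendental case). $T^C_\theta:=T_\theta\cup\{\theta|_{\mathbb V}\text{ is a }C\text{-endomorphism}\}$. Existentially closed model of $T'$: for every extension $(\mathcal M',\theta')\supseteq(\mathcal M,\theta)$ with $(\mathcal M',\theta')\models T'$, every existential sentence with parameters in $\mathcal M$ true in the extension is true in $(\mathcal M,\theta)$. Placeholder notation: for $\underline x=(x_1,\dots,x_n)$, $\vec x=(x^i_k:1\le k\le n,i\in\omega)$ are new variables (finitely many occur in any formula) and $\psi_\theta(\underline x)$ is $\psi(\vec x)$ with each $x^i_k$ replaced by $\theta^i(x_k)$. *)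

From HB Require Import structures.
From mathcomp Require Import all_boot all_order all_algebra.
From Stdlib Require Import ClassicalEpsilon Cantor.

Set Implicit Arguments.
Unset Strict Implicit.
Unset Printing Implicit Defensive.
Import GRing.Theory.
Local Open Scope ring_scope.

Record lang := Lang {
  fsym : Type;
  rsym : Type;
  far : fsym -> nat;
  rar : rsym -> nat }.

Section Syntax.
Variable L : lang.

Inductive fo_term : Type :=
  | tvar : nat -> fo_term
  | tapp : forall f : fsym L, ('I_(far f) -> fo_term) -> fo_term.

Inductive fo_form : Type :=
  | fFalse : fo_form
  | fTrue : fo_form
  | fEq : fo_term -> fo_term -> fo_form
  | fRel : forall r : rsym L, ('I_(rar r) -> fo_term) -> fo_form
  | fNot : fo_form -> fo_form
  | fAnd : fo_form -> fo_form -> fo_form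
  | fOr : fo_form -> fo_form -> fo_form
  | fImp : fo_form -> fo_form -> fo_form
  | fEx : nat -> fo_form -> fo_form
  | fAll : nat -> fo_form -> fo_form.

Fixpoint qf (phi : fo_form) : Prop :=
  match phi with
  | fFalse | fTrue | fEq _ _ | fRel _ _ => True
  | fNot p => qf p
  | fAnd p q | fOr p q | fImp p q => qf p /\ qf q
  | fEx _ _ | fAll _ _ => False
  end.

Inductive existential : fo_form -> Prop :=
  | ex_qf : forall phi, qf phi -> existential phi
  | ex_ex : forall n phi, existential phi -> existential (fEx n phi).

Fixpoint tfree (v : nat) (t : fo_term) : Prop :=
  match t with
  | tvar m => m = v
  | tapp f a => exists i, tfree v (a i)
  end.

Fixpoint ffree (v : nat) (phi : fo_form) : Prop :=
  match phi with
  | fFalse | fTrue => False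
  | fEq t1 t2 => tfree v t1 \/ tfree v t2
  | fRel r a => exists i, tfree v (a i)
  | fNot p => ffree v p
  | fAnd p q | fOr p q | fImp p q => ffree v p \/ ffree v q
  | fEx m p | fAll m p => m <> v /\ ffree v p
  end.
End Syntax.

Arguments tvar {L}.
Arguments fFalse {L}.
Arguments fTrue {L}.

Record struc (L : lang) := Struc {
  dom :> Type;
  dom_inh : inhabited dom;
  fint : forall f : fsym L, ('I_(far f) -> dom) -> dom;
  rint : forall r : rsym L, ('I_(rar r) -> dom) -> Prop }.

Definition upd {A : Type} (e : nat -> A) (n : nat) (a : A) : nat -> A :=
  fun m => if m == n then a else e m.

Section Semantics.
Variables (L : lang) (M : struc L).

Fixpoint teval (e : nat -> M) (t : fo_term L) : M :=
  match t with
  | tvar n => e n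
  | tapp f a => @fint L M f (fun i => teval e (a i))
  end.

Fixpoint sat (e : nat -> M) (phi : fo_form L) : Prop :=
  match phi with
  | fFalse => False
  | fTrue => True
  | fEq t1 t2 => teval e t1 = teval e t2
  | fRel r a => @rint L M r (fun i => teval e (a i))
  | fNot p => ~ sat e p
  | fAnd p q => sat e p /\ sat e q
  | fOr p q => sat e p \/ sat e q
  | fImp p q => sat e p -> sat e q
  | fEx n p => exists a : M, sat (upd e n a) p
  | fAll n p => forall a : M, sat (upd e n a) p
  end.
End Semantics.

(* embeddings of structures (an extension N of M is given by an embedding) *)
Definition embedding (L : lang) (M N : struc L) (h : M -> N) : Prop :=
  injective h /\
  (forall (f : fsym L) (a : 'I_(far f) -> M), h (@fint L M f a) = @fint L N f (h \o a)) /\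
  (forall (r : rsym L) (a : 'I_(rar r) -> M), @rint L M r a <-> @rint L N r (h \o a)).

(* theories are sets of formulas; a model satisfies the universal closure of
   each member *)
Definition theory (L : lang) := fo_form L -> Prop.

Definition is_model (L : lang) (T : theory L) (M : struc L) : Prop :=
  forall phi, T phi -> forall e : nat -> M, sat e phi.

Definition model_complete (L : lang) (T : theory L) : Prop :=
  forall (M N : struc L) (h : M -> N), is_model T M -> is_model T N ->
    embedding h -> forall (phi : fo_form L) (e : nat -> M), sat e phi <-> sat (h \o e) phi.

(* L_theta = L + a new unary function symbol theta; L(A) = L + constants *)

Definition lang_theta (L : lang) : lang :=
  Lang (fun f : option (fsym L) => match f with None => 1%N | Some g => far g end)
       (@rar L).

Definition expand_theta (L : lang) (M : struc L) (th : M -> M) : struc (lang_theta L) :=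
  @Struc (lang_theta L) M (dom_inh M)
    (fun f => match f as o return ('I_(@far (lang_theta L) o) -> M) -> M with
              | None => fun a => th (a ord0)
              | Some g => fun a => @fint L M g a
              end)
    (@rint L M).

Definition lang_consts (L : lang) (A : Type) : lang :=
  Lang (fun f : fsym L + A => match f with inl g => far g | inr _ => 0%N end)
       (@rar L).

Definition expand_consts (L : lang) (A : Type) (N : struc L) (c : A -> N) :
  struc (lang_consts L A) :=
  @Struc (lang_consts L A) N (dom_inh N)
    (fun f => match f as o return ('I_(@far (lang_consts L A) o) -> N) -> N with
              | inl g => fun a => @fint L N g a
              | inr x => fun _ => c x
              end)
    (@rint L N).

(* V(x0); zero(x0); add(x0,x1,x2) ("x0 + x1 = x2"); scal_a(x0,x1) ("a x0 = x1") *)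
Record vsdef (L : lang) (K : fieldType) := VSDef {
  vs_set : fo_form L;
  vs_zero : fo_form L;
  vs_add : fo_form L;
  vs_scal : K -> fo_form L }.

Definition env1 {A : Type} (x : A) : nat -> A := fun _ => x.
Definition env2 {A : Type} (x y : A) : nat -> A :=
  fun n => match n with 0%N => x | _ => y end.
Definition env3 {A : Type} (x y z : A) : nat -> A :=
  fun n => match n with 0%N => x | 1%N => y | _ => z end.

Section VS.
Variables (L : lang) (K : fieldType) (D : vsdef L K) (M : struc L).

Definition inV (x : M) : Prop := sat (env1 x) (vs_set D).
Definition vzero : M := epsilon (dom_inh M) (fun z => sat (env1 z) (vs_zero D)).
Definition vadd (x y : M) : M :=
  epsilon (dom_inh M) (fun z => sat (env3 x y z) (vs_add D)).
Definition vscal (a : K) (x : M) : M :=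
  epsilon (dom_inh M) (fun z => sat (env2 x z) (vs_scal D a)).

Definition defines_nontrivial_vs : Prop :=
  (exists! z : M, sat (env1 z) (vs_zero D)) /\ inV vzero /\
  (forall x y, inV x -> inV y -> exists! z : M, sat (env3 x y z) (vs_add D)) /\
  (forall a x, inV x -> exists! z : M, sat (env2 x z) (vs_scal D a)) /\
  (forall x y, inV x -> inV y -> inV (vadd x y)) /\
  (forall a x, inV x -> inV (vscal a x)) /\
  (forall x y z, inV x -> inV y -> inV z -> vadd x (vadd y z) = vadd (vadd x y) z) /\
  (forall x y, inV x -> inV y -> vadd x y = vadd y x) /\
  (forall x, inV x -> vadd vzero x = x) /\
  (forall x, inV x -> exists y, inV y /\ vadd x y = vzero) /\
  (forall a x y, inV x -> inV y -> vscal a (vadd x y) = vadd (vscal a x) (vscal a y)) /\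
  (forall a b x, inV x -> vscal (a + b) x = vadd (vscal a x) (vscal b x)) /\
  (forall a b x, inV x -> vscal (a * b) x = vscal a (vscal b x)) /\
  (forall x, inV x -> vscal 1 x = x) /\
  (exists v, inV v /\ v <> vzero).

Variable th : M -> M.

Definition peval (rho : {poly K}) (v : M) : M :=
  foldr (fun i acc => vadd (vscal rho`_i (iter i th v)) acc) vzero
        (iota 0 (size rho)).

Definition inKer (rho : {poly K}) (v : M) : Prop := inV v /\ peval rho v = vzero.

Definition theta_axioms : Prop :=
  (forall x, inV x -> inV (th x)) /\
  (forall x y, inV x -> inV y -> th (vadd x y) = vadd (th x) (th y)) /\
  (forall a x, inV x -> th (vscal a x) = vscal a (th x)) /\
  (forall x, ~ inV x -> th x = vzero).
End VS.

Definition monic_irr (K : fieldType) (f : {poly K}) : Prop :=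
  f \is monic /\ irreducible_poly f.

(* C = (c, d); None stands for infinity.  c is only relevant on K[X]_irr. *)
Record kconf (K : fieldType) := KConf {
  kc : {poly K} -> option nat;
  kd : option nat }.

Definition kc_support (K : fieldType) (C : kconf K) (s : seq {poly K}) : Prop :=
  uniq s /\ (forall f, f \in s -> monic_irr f /\ kc C f <> None) /\
  (forall f, monic_irr f -> f \notin s -> kc C f = Some 0%N).

Definition kernel_configuration (K : fieldType) (C : kconf K) : Prop :=
  match kd C with
  | None => True
  | Some d => (0 < d)%N /\
      exists s, kc_support C s /\
        d = (\sum_(f <- s) (size f).-1 * odflt 0%N (kc C f))%N
  end.

Definition MiPo (K : fieldType) (C : kconf K) (s : seq {poly K}) : {poly K} :=
  \prod_(f <- s) f ^+ odflt 0%N (kc C f).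

Definition C_endomorphism (L : lang) (K : fieldType) (D : vsdef L K) (C : kconf K)
  (M : struc L) (th : M -> M) : Prop :=
  match kd C with
  | Some _ => exists s, kc_support C s /\
      (forall v, inV D v -> inKer D th (MiPo C s) v)
  | None => forall f k, monic_irr f -> kc C f = Some k ->
      forall v, inKer D th (f ^+ k) v <-> inKer D th (f ^+ k.+1) v
  end.

Definition model_TthC (L : lang) (K : fieldType) (T : theory L) (D : vsdef L K)
  (C : kconf K) (M : struc L) (th : M -> M) : Prop :=
  is_model T M /\ theta_axioms D th /\ C_endomorphism D C th.

(* existentially closed model of T_theta^C; existential L_theta-sentences with
   parameters in M = existential L_theta-formulas with their free variables
   assigned elements of M *)
Definition ec_model_TthC (L : lang) (K : fieldType) (T : theory L) (D : vsdef L K)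
  (C : kconf K) (M : struc L) (th : M -> M) : Prop :=
  model_TthC T D C th /\
  forall (N : struc L) (th' : N -> N) (h : M -> N),
    model_TthC T D C th' ->
    embedding (M := expand_theta th) (N := expand_theta th') h ->
    forall (phi : fo_form (lang_theta L)) (e : nat -> M), existential phi ->
      sat (M := expand_theta th') (h \o e) phi -> sat (M := expand_theta th) e phi.

(* Placeholder variables: x^i_k is the variable Cantor.to_nat (k, i)    *)
(* (k counted from 0); psi_theta(x) is evaluated by assigning            *)
(* theta^i(x_k) to x^i_k.                                               *)

Definition pvar (k i : nat) : nat := Cantor.to_nat (k, i).

Definition penv (A : Type) (th : A -> A) (x : nat -> A) : nat -> A :=
  fun v => let: (k, i) := Cantor.of_nat v in iter i th (x k).

Definition placeholder_formula (L : lang) (n : nat) (psi : fo_form L) : Prop :=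
  forall v, ffree v psi -> ((Cantor.of_nat v).1 < n)%N.

(* (N, th') |= exists x in V^n : psi_theta(x), psi an L(A)-formula whose
   constants a : A are interpreted as c a *)
Definition sat_exV_theta (L : lang) (K : fieldType) (D : vsdef L K) (A : Type)
  (N : struc L) (th' : N -> N) (c : A -> N) (n : nat) (psi : fo_form (lang_consts L A))
  : Prop :=
  exists x : nat -> N, (forall k, (k < n)%N -> inV D (x k)) /\
    sat (M := expand_consts c) (penv th' x) psi.

(* If (M, theta) is existentially closed, every extension (N, theta') embeds over M
   into an ultrapower of (M, theta): the index set consists of the quantifier-free
   facts of N with parameters from M, each of which is realized in M by existential
   closedness.  As T is model complete, this embedding is elementary for L, so a
   formula [exists x in V, psi_theta(x)] true in N holds in the ultrapower and, by
   Los's theorem, in M.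
   Conversely, an existential L_theta-formula is rewritten as such a placeholder
   formula: every occurrence theta(s) becomes a placeholder x^1 tied to a
   placeholder x^0 in V, either by s = x^0, or by s not in V and x^1 = 0, since
   theta vanishes outside V.  The rewritten formula holds in N whenever the
   original one does, and each of its solutions in M yields the original formula. *)

From mathcomp Require Import all_boot all_order all_algebra.
From mathcomp Require Import zify.
From mathcomp Require Import boolp classical_sets filter.
From Stdlib Require Import ClassicalEpsilon Cantor.

Set Implicit Arguments.
Unset Strict Implicit.
Unset Printing Implicit Defensive.
Local Open Scope classical_set_scope.

(** * Ultrapowers and Los's theorem *)

Lemma sat_Struc_eq (L : lang) (X : Type) (i1 i2 : inhabited X) f1 f2 rel (e : nat -> X) phi :
  f1 = f2 -> sat (M := @Struc L X i1 f1 rel) e phi -> sat (M := @Struc L X i2 f2 rel) e phi.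
Proof. by move=> <-; rewrite (Prop_irrelevance i1 i2). Qed.

Section Ultrapower.
Context (I : Type) (U : set_system I) {U_ultra : UltraFilter U}.

Lemma ultra_all (A : I -> Prop) : (forall j, A j) -> U A.
Proof. by move=> A_all; apply: filterS filterT => j _; apply: A_all. Qed.

Lemma ultraN (A : I -> Prop) : ~ U A <-> U (fun j => ~ A j).
Proof.
split; first by case: (in_ultra_setVsetC A U_ultra).
by move=> UnA UA; apply: (filter_const (F := U)); apply: filterS2 UA UnA => j.
Qed.

Lemma ultraI (A B : I -> Prop) : U A /\ U B <-> U (fun j => A j /\ B j).
Proof.
split=> [[UA UB] | UAB]; first exact: filterS2 UA UB.
by split; apply: filterS UAB => j [].
Qed.

Lemma ultraU (A B : I -> Prop) : U A \/ U B <-> U (fun j => A j \/ B j).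
Proof.
split; first by case; apply: filterS => j; [left | right].
move=> UAB; case: (in_ultra_setVsetC A U_ultra) => [|UnA]; first by left.
by right; apply: filterS2 UAB UnA => j [].
Qed.

Lemma ultra_imply (A B : I -> Prop) : (U A -> U B) <-> U (fun j => A j -> B j).
Proof.
split; last by move=> UAB UA; apply: filterS2 UAB UA => j; apply.
move=> UAB; case: (in_ultra_setVsetC A U_ultra) => [/UAB UB | UnA].
  by apply: filterS UB => j Bj _.
by apply: filterS UnA => j nAj /nAj.
Qed.

Section Carrier.
Variable X : Type.

Definition ultra_eq (f g : I -> X) : Prop := U (fun j => f j = g j).

(* Only the carrier type enters, so a structure and its expansions by theta or by
   constants have the same ultrapower carrier. *)
Definition ultrapower_car : Type := {P : (I -> X) -> Prop | exists f, P = ultra_eq f}.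

Definition uclass (f : I -> X) : ultrapower_car := exist _ (ultra_eq f) (ex_intro _ f erefl).

Lemma uclass_eqP (f g : I -> X) : uclass f = uclass g <-> U (fun j => f j = g j).
Proof.
split=> [fg | Ufg].
  have : proj1_sig (uclass g) g by apply: ultra_all.
  by rewrite -fg.
apply: eq_exist; apply/funext => k; apply/propext.
by split; apply: filterS2 Ufg => j ->.
Qed.

Definition urep (a : ultrapower_car) : I -> X := projT1 (cid (proj2_sig a)).

Lemma urepK (a : ultrapower_car) : uclass (urep a) = a.
Proof.
rewrite /urep; case: cid => f /= Ef.
by case: a Ef => P HP /= Ef; apply: eq_exist.
Qed.

Lemma uclassK (f : I -> X) : U (fun j => urep (uclass f) j = f j).
Proof. by apply/uclass_eqP; rewrite urepK. Qed.

Lemma ultra_forall_uclassK k (F : 'I_k -> I -> X) :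
  U (fun j => forall i, urep (uclass (F i)) j = F i j).
Proof. by apply: filter_forall => i; apply: uclassK. Qed.

End Carrier.

Section Los.
Variables (L : lang) (S : struc L).

Lemma ultrapower_inh : inhabited (ultrapower_car S).
Proof. by case: (dom_inh S) => s; exact: inhabits (uclass (fun=> s)). Qed.

Definition ultrapower : struc L :=
  @Struc L (ultrapower_car S) ultrapower_inh
    (fun f a => uclass (fun j => @fint L S f (fun i => urep (a i) j)))
    (fun r a => U (fun j => @rint L S r (fun i => urep (a i) j))).

Lemma ultrapower_fint f (F : 'I_(far f) -> I -> S) :
  @fint L ultrapower f (fun i => uclass (F i)) = uclass (fun j => @fint L S f (fun i => F i j)).
Proof.
apply/uclass_eqP; apply: filterS (ultra_forall_uclassK F) => j FK.
by congr fint; apply/funext => i.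
Qed.

Lemma ultrapower_rint r (F : 'I_(rar r) -> I -> S) :
  @rint L ultrapower r (fun i => uclass (F i)) <-> U (fun j => @rint L S r (fun i => F i j)).
Proof.
have E j : (forall i, urep (uclass (F i)) j = F i j) ->
    (fun i => urep (uclass (F i)) j) = (fun i => F i j) by move=> FK; apply/funext.
by split; apply: filterS2 (ultra_forall_uclassK F) => j /E ->.
Qed.

Section Represented.
Variables (es : nat -> ultrapower) (E : I -> nat -> S).
Hypothesis es_E : forall v, uclass (fun j => E j v) = es v.

Lemma los_teval t : teval es t = uclass (fun j => teval (E j) t).
Proof.
elim: t => [v | f a IH]; first by rewrite /= es_E.
rewrite -[RHS]ultrapower_fint.
by congr (@fint L ultrapower f); apply/funext.
Qed.

Lemma represented_upd v (b : I -> S) w :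
  uclass (fun j => upd (E j) v (b j) w) = upd es v (uclass b) w.
Proof. by rewrite /upd; case: (w == v). Qed.

End Represented.

Theorem los phi (es : nat -> ultrapower) (E : I -> nat -> S) :
  (forall v, uclass (fun j => E j v) = es v) ->
  (sat es phi <-> U (fun j => sat (E j) phi)).
Proof.
elim: phi es E => [| | t1 t2 | r a | p IH | p IHp q IHq | p IHp q IHq | p IHp q IHq
                  | v p IH | v p IH] es E es_E /=.
- by split=> // /(filter_const (F := U)).
- by split=> // _; apply: ultra_all.
- by rewrite !(los_teval es_E) uclass_eqP.
- have := ultrapower_rint (fun i j => teval (E j) (a i)).
  have -> : (fun i => uclass (fun j => teval (E j) (a i))) = (fun i => teval es (a i)).
    by apply/funext => i; rewrite (los_teval es_E).
  by apply.
- by rewrite (IH _ _ es_E) ultraN.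
- by rewrite (IHp _ _ es_E) (IHq _ _ es_E) ultraI.
- by rewrite (IHp _ _ es_E) (IHq _ _ es_E) ultraU.
- by rewrite (IHp _ _ es_E) (IHq _ _ es_E) ultra_imply.
- split=> [[a] | Uex].
    rewrite (IH _ (fun j => upd (E j) v (urep a j))) => [|w]; last first.
      by rewrite (represented_upd es_E) urepK.
    by apply: filterS => j; exists (urep a j).
  pose b j := epsilon (dom_inh S) (fun a => sat (upd (E j) v a) p).
  exists (uclass b); rewrite (IH _ (fun j => upd (E j) v (b j))); last exact: represented_upd.
  apply: filterS Uex => j ex_j.
  exact: (epsilon_spec (dom_inh S) (fun a => sat (upd (E j) v a) p) ex_j).
- split=> [all_a | Uall a]; last first.
    rewrite (IH _ (fun j => upd (E j) v (urep a j))) => [|w]; last first.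
      by rewrite (represented_upd es_E) urepK.
    by apply: filterS Uall => j; apply.
  apply: contrapT => /ultraN Unall.
  pose b j := epsilon (dom_inh S) (fun a => ~ sat (upd (E j) v a) p).
  have := all_a (uclass b).
  rewrite (IH _ (fun j => upd (E j) v (b j))); last exact: represented_upd.
  apply/ultraN; apply: filterS Unall => j /existsNP ex_j.
  exact: (epsilon_spec (dom_inh S) (fun a => ~ sat (upd (E j) v a) p) ex_j).
Qed.

End Los.

Lemma sat_ultrapower_consts (L : lang) (S : struc L) (A : Type) (cc : A -> S)
    (e : nat -> ultrapower S) phi :
  sat (M := @expand_consts L A (ultrapower S) (fun c => uclass (fun=> cc c))) e phi ->
  sat (M := ultrapower (expand_consts cc)) e phi.
Proof.
by apply: sat_Struc_eq; apply: functional_extensionality_dep => -[g | c]; apply/funext.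
Qed.

End Ultrapower.

(** * Operations on formulas *)

Section Syntax.
Variable L : lang.
Implicit Types (phi : fo_form L) (t : fo_term L).

Lemma eq_sat (S : struc L) (r1 r2 : nat -> S) phi : r1 =1 r2 -> sat r1 phi -> sat r2 phi.
Proof. by move=> /funext ->. Qed.

Lemma teval_upd_notfree (S : struc L) (e : nat -> S) z a t :
  ~ tfree z t -> teval (upd e z a) t = teval e t.
Proof.
elim: t => [v | f b IH] /= zt; first by rewrite /upd; case: eqP => // E; case: zt.
by congr fint; apply/funext => i; apply: IH => zi; apply: zt; exists i.
Qed.

Definition fExs (ws : seq nat) phi : fo_form L := foldr (@fEx L) phi ws.

Lemma sat_fExs (S : struc L) ws phi (e : nat -> S) :
  sat e (fExs ws phi) <-> exists f : nat -> S, sat (fun u => if u \in ws then f u else e u) phi.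
Proof.
elim: ws phi e => [|w ws IH] phi e /=.
  by split=> [H | [f]]; first exists e.
split=> [[a /IH [f sat_f]] | [f sat_f]].
  exists (fun u => if u \in ws then f u else a); apply: eq_sat sat_f => u.
  by rewrite inE /upd; case: (u \in ws); case: (u == w).
exists (f w); apply/IH; exists f; apply: eq_sat sat_f => u.
by rewrite inE /upd; case: (u \in ws); rewrite ?orbT ?orbF //; case: eqP => [->|].
Qed.

Definition env_prefix (X : Type) (B : nat) (w e : nat -> X) (v : nat) : X :=
  if v < B then w v else e v.

Lemma sat_fExs_iota (S : struc L) B phi (e : nat -> S) :
  sat e (fExs (iota 0 B) phi) <-> exists w, sat (env_prefix B w e) phi.
Proof.
rewrite sat_fExs; split=> -[w sat_w]; exists w; apply: eq_sat sat_w => v;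
  by rewrite /env_prefix mem_iota.
Qed.

Lemma existential_fExs ws phi : qf phi -> existential (fExs ws phi).
Proof. by move=> qf_phi; elim: ws => [|w ws IH]; [apply: ex_qf | apply: ex_ex]. Qed.

Lemma existentialP phi : existential phi -> exists ws chi, phi = fExs ws chi /\ qf chi.
Proof.
elim=> [chi qf_chi | n p _ [ws [chi [-> qf_chi]]]]; first by exists [::], chi.
by exists (n :: ws), chi.
Qed.

Lemma ffree_fExs ws phi v : ffree v (fExs ws phi) -> v \notin ws /\ ffree v phi.
Proof.
elim: ws => [|w ws IH] //= [vw /IH [v_ws v_phi]]; split=> //.
by rewrite inE negb_or v_ws andbT; apply/eqP => E; apply: vw.
Qed.

Definition fAnds k (F : 'I_k -> fo_form L) : fo_form L :=
  foldr (fun i => fAnd (F i)) fTrue (enum 'I_k).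

Lemma sat_fAnds (S : struc L) (r : nat -> S) k (F : 'I_k -> fo_form L) :
  sat r (fAnds F) <-> forall i, sat r (F i).
Proof.
suff sat_foldr s : sat r (foldr (fun i => fAnd (F i)) fTrue s) <-> forall i, i \in s -> sat r (F i).
  by rewrite sat_foldr; split=> Fr i //; apply: Fr; rewrite mem_enum.
elim: s => [|j s IH] /=; first by split.
rewrite IH; split=> [[Fj Fs] i | Fs]; first by rewrite inE => /predU1P [->|/Fs].
by split=> [|i s_i]; apply: Fs; rewrite inE ?eqxx ?s_i ?orbT.
Qed.

Lemma qf_fAnds k (F : 'I_k -> fo_form L) : (forall i, qf (F i)) -> qf (fAnds F).
Proof. by rewrite /fAnds => qfF; elim: (enum 'I_k) => //= i s ->. Qed.

Lemma ffree_fAnds v k (F : 'I_k -> fo_form L) : ffree v (fAnds F) -> exists i, ffree v (F i).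
Proof. by rewrite /fAnds; elim: (enum 'I_k) => [|i s IH] //= [|/IH]; [exists i|]. Qed.

Definition eq_diagram (X : Type) (eps : nat -> X) (B : nat) : fo_form L :=
  fAnds (fun v : 'I_B => fAnds (fun v' : 'I_B =>
    if pselect (eps v = eps v') then fEq (tvar v) (tvar v') else fTrue)).

Lemma qf_eq_diagram (X : Type) (eps : nat -> X) B : qf (eq_diagram eps B).
Proof. by do 2!apply: qf_fAnds => ?; case: pselect. Qed.

Lemma sat_eq_diagram (S : struc L) (r : nat -> S) (X : Type) (eps : nat -> X) B :
  sat r (eq_diagram eps B) <-> forall v v' : 'I_B, eps v = eps v' -> r v = r v'.
Proof.
rewrite sat_fAnds; split=> [diag v v' | diag v]; last first.
  by apply/sat_fAnds => v'; case: pselect => //= /diag.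
by move: (diag v) => /sat_fAnds /(_ v'); case: pselect.
Qed.

Fixpoint rename_t (f : nat -> nat) t : fo_term L :=
  match t with tvar v => tvar (f v) | tapp g a => tapp (fun i => rename_t f (a i)) end.

(* Only meaningful on quantifier-free formulas: quantifiers are sent to [fFalse]. *)
Fixpoint rename_qf (f : nat -> nat) phi : fo_form L :=
  match phi with
  | fFalse => fFalse
  | fTrue => fTrue
  | fEq t1 t2 => fEq (rename_t f t1) (rename_t f t2)
  | fRel _ a => fRel (fun i => rename_t f (a i))
  | fNot p => fNot (rename_qf f p)
  | fAnd p q => fAnd (rename_qf f p) (rename_qf f q)
  | fOr p q => fOr (rename_qf f p) (rename_qf f q)
  | fImp p q => fImp (rename_qf f p) (rename_qf f q)
  | fEx _ _ | fAll _ _ => fFalse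
  end.

Lemma teval_rename (S : struc L) (e : nat -> S) f t :
  teval e (rename_t f t) = teval (e \o f) t.
Proof. by elim: t => //= g a IH; congr fint; apply/funext => i; apply: IH. Qed.

Lemma qf_rename f phi : qf (rename_qf f phi).
Proof. by elim: phi => //= *; split. Qed.

Lemma sat_rename (S : struc L) f phi (e : nat -> S) :
  qf phi -> sat e (rename_qf f phi) <-> sat (e \o f) phi.
Proof.
elim: phi e => //= [t1 t2 | r a | p IH | p IHp q IHq | p IHp q IHq | p IHp q IHq] e.
- by rewrite !teval_rename.
- by rewrite (funext (fun i => teval_rename e f (a i))).
- by move=> /IH ->.
- by move=> [/IHp -> /IHq ->].
- by move=> [/IHp -> /IHq ->].
- by move=> [/IHp -> /IHq ->].
Qed.

Fixpoint bound_max phi : nat :=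
  match phi with
  | fNot p => bound_max p
  | fAnd p q | fOr p q | fImp p q => maxn (bound_max p) (bound_max q)
  | fEx m p | fAll m p => maxn m (bound_max p)
  | _ => 0
  end.

Fixpoint rename_free_t (w : nat) (bnd : seq nat) t : fo_term L :=
  match t with
  | tvar m => tvar (if m \in bnd then m else w)
  | tapp f a => tapp (fun i => rename_free_t w bnd (a i))
  end.

(* [bnd] collects the variables bound so far; every other variable becomes [w]. *)
Fixpoint rename_free (w : nat) (bnd : seq nat) phi : fo_form L :=
  match phi with
  | fFalse => fFalse
  | fTrue => fTrue
  | fEq t1 t2 => fEq (rename_free_t w bnd t1) (rename_free_t w bnd t2)
  | fRel _ a => fRel (fun i => rename_free_t w bnd (a i))
  | fNot p => fNot (rename_free w bnd p)
  | fAnd p q => fAnd (rename_free w bnd p) (rename_free w bnd q)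
  | fOr p q => fOr (rename_free w bnd p) (rename_free w bnd q)
  | fImp p q => fImp (rename_free w bnd p) (rename_free w bnd q)
  | fEx m p => fEx m (rename_free w (m :: bnd) p)
  | fAll m p => fAll m (rename_free w (m :: bnd) p)
  end.

Lemma teval_rename_free (S : struc L) (e : nat -> S) w bnd t :
  teval e (rename_free_t w bnd t) = teval (fun m => if m \in bnd then e m else e w) t.
Proof.
elim: t => [v | f a IH] /=; first by case: (v \in bnd).
by congr fint; apply/funext => i; apply: IH.
Qed.

Lemma upd_bound_env (X : Type) (e : nat -> X) w v bnd a : (w == v) = false ->
  (fun m => if m \in v :: bnd then upd e v a m else upd e v a w)
  = upd (fun m => if m \in bnd then e m else e w) v a.
Proof. by move=> wv; apply/funext => m; rewrite /upd inE wv; case: (m == v). Qed.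

Lemma sat_rename_free_gen (S : struc L) w phi : bound_max phi < w ->
  forall bnd (e : nat -> S),
  sat e (rename_free w bnd phi) <-> sat (fun m => if m \in bnd then e m else e w) phi.
Proof.
elim: phi => [| | t1 t2 | r a | p IH | p IHp q IHq | p IHp q IHq | p IHp q IHq
             | v p IH | v p IH] /=; rewrite ?gtn_max.
- by [].
- by [].
- by move=> _ bnd e; rewrite !teval_rename_free.
- by move=> _ bnd e; rewrite (funext (fun i => teval_rename_free e w bnd (a i))).
- by move=> /IH IHp bnd e; rewrite IHp.
- by case/andP=> /IHp IHp' /IHq IHq' bnd e; rewrite IHp' IHq'.
- by case/andP=> /IHp IHp' /IHq IHq' bnd e; rewrite IHp' IHq'.
- by case/andP=> /IHp IHp' /IHq IHq' bnd e; rewrite IHp' IHq'.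
all: case/andP=> vw /IH IHp bnd e.
all: have IHa a : sat (upd e v a) (rename_free w (v :: bnd) p) <->
                  sat (upd (fun m => if m \in bnd then e m else e w) v a) p
       by rewrite IHp (upd_bound_env _ _ _ (gtn_eqF vw)).
- by split=> -[a /IHa]; exists a.
- by split=> all_a a; apply/IHa.
Qed.

Lemma sat_rename_free (S : struc L) w phi (e : nat -> S) : bound_max phi < w ->
  sat e (rename_free w [::] phi) <-> sat (env1 (e w)) phi.
Proof. by move=> /sat_rename_free_gen ->. Qed.

Lemma tfree_rename_free w bnd t v : tfree v (rename_free_t w bnd t) -> v = w \/ v \in bnd.
Proof.
elim: t => [m | f a IH] /=; last by move=> [i /IH].
by case: ifP => m_bnd <-; [right | left].
Qed.

Lemma ffree_rename_free w phi bnd v : ffree v (rename_free w bnd phi) -> v = w \/ v \in bnd.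
Proof.
elim: phi bnd => [| | t1 t2 | r a | p IH | p IHp q IHq | p IHp q IHq | p IHp q IHq
                 | m p IH | m p IH] bnd //=.
- by case; apply: tfree_rename_free.
- by move=> [i /tfree_rename_free].
- exact: IH.
- by case; [apply: IHp | apply: IHq].
- by case; [apply: IHp | apply: IHq].
- by case; [apply: IHp | apply: IHq].
- by move=> [mv /IH [->|]]; [left | rewrite inE => /predU1P [vm|]; [case: mv; rewrite vm | right]].
- by move=> [mv /IH [->|]]; [left | rewrite inE => /predU1P [vm|]; [case: mv; rewrite vm | right]].
Qed.

End Syntax.

Arguments eq_diagram {L X}.

(** * Eliminating constants *)

Section ConstantElimination.
Variables (L : lang) (A : Type).
Local Notation LA := (lang_consts L A).
Implicit Types (phi : fo_form LA) (t : fo_term LA) (cs : list A).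

Definition sublist cs cs' := forall c, List.In c cs -> List.In c cs'.

Lemma sublist_catl cs cs' : sublist cs (cs ++ cs').
Proof. by move=> c c_cs; apply: List.in_or_app; left. Qed.

Lemma sublist_catr cs cs' : sublist cs' (cs ++ cs').
Proof. by move=> c c_cs; apply: List.in_or_app; right. Qed.

Fixpoint bounded_t (B : nat) cs t : Prop :=
  match t with
  | tvar v => v < B
  | tapp f a => (if f is inr c then List.In c cs else True) /\ forall i, bounded_t B cs (a i)
  end.

Fixpoint bounded (B : nat) cs phi : Prop :=
  match phi with
  | fFalse | fTrue => True
  | fEq t1 t2 => bounded_t B cs t1 /\ bounded_t B cs t2
  | fRel _ a => forall i, bounded_t B cs (a i)
  | fNot p => bounded B cs p
  | fAnd p q | fOr p q | fImp p q => bounded B cs p /\ bounded B cs q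
  | fEx m p | fAll m p => m < B /\ bounded B cs p
  end.

Lemma bounded_t_mono B B' cs cs' t :
  B <= B' -> sublist cs cs' -> bounded_t B cs t -> bounded_t B' cs' t.
Proof.
move=> BB' cs_cs'; elim: t => [v | [g | c] a IH] /=; first by move/leq_trans; apply.
all: by move=> [c_cs a_bd]; split=> [|i]; [try exact: cs_cs' | exact: IH].
Qed.

Lemma bounded_mono B B' cs cs' phi :
  B <= B' -> sublist cs cs' -> bounded B cs phi -> bounded B' cs' phi.
Proof.
move=> BB' cs_cs'; have mono_t := bounded_t_mono BB' cs_cs'.
elim: phi => //= [t1 t2 [] | r a bd i | p IHp q IHq [] | p IHp q IHq [] | p IHp q IHq []
                 | m p IH [] | m p IH []]; try by split; auto.
- exact: mono_t.
- by move=> mB /IH; split=> //; apply: leq_trans BB'.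
- by move=> mB /IH; split=> //; apply: leq_trans BB'.
Qed.

Lemma bounded_finite k (P : 'I_k -> nat -> list A -> Prop) :
  (forall i B B' cs cs', B <= B' -> sublist cs cs' -> P i B cs -> P i B' cs') ->
  (forall i, exists B cs, P i B cs) -> exists B cs, forall i, P i B cs.
Proof.
elim: k P => [|k IH] P P_mono P_ex; first by exists 0, nil => -[].
have [B1 [cs1 P1]] :=
  IH (fun i => P (widen_ord (leqnSn k) i)) (fun i => P_mono _) (fun i => P_ex _).
have [B2 [cs2 P2]] := P_ex ord_max.
exists (maxn B1 B2), (cs1 ++ cs2) => i; have [ik | ki] := ltnP i k.
  have -> : i = widen_ord (leqnSn k) (Ordinal ik) by apply: val_inj.
  by apply: P_mono; [apply: leq_maxl | apply: sublist_catl | apply: P1].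
have -> : i = ord_max by apply/val_inj/eqP; rewrite eqn_leq ki -ltnS ltn_ord.
by apply: P_mono; [apply: leq_maxr | apply: sublist_catr | apply: P2].
Qed.

Lemma bounded_t_exists t : exists B cs, bounded_t B cs t.
Proof.
elim: t => [v | f a IH] /=; first by exists v.+1, nil.
have [B [cs a_bd]] : exists B cs, forall i, bounded_t B cs (a i).
  apply: bounded_finite => [i B B' cs cs' BB' ss bd | i]; last exact: IH.
  exact: bounded_t_mono BB' ss bd.
case: f a IH a_bd => [g | c] a _ a_bd; first by exists B, cs.
exists B, (c :: cs); split=> [|i]; first by left.
by apply: bounded_t_mono (a_bd i) => // c' c'_cs; right.
Qed.

Lemma bounded_exists phi : exists B cs, bounded B cs phi.
Proof.
have join B1 B2 cs1 cs2 p q : bounded B1 cs1 p -> bounded B2 cs2 q ->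
    bounded (maxn B1 B2) (cs1 ++ cs2) p /\ bounded (maxn B1 B2) (cs1 ++ cs2) q.
  move=> bd1 bd2; split; [apply: bounded_mono bd1 | apply: bounded_mono bd2];
    rewrite ?leq_maxl ?leq_maxr //; [apply: sublist_catl | apply: sublist_catr].
elim: phi => /= [| | t1 t2 | r a | p IH | p [B1 [cs1 IHp]] q [B2 [cs2 IHq]]
               | p [B1 [cs1 IHp]] q [B2 [cs2 IHq]] | p [B1 [cs1 IHp]] q [B2 [cs2 IHq]]
               | m p [B [cs IH]] | m p [B [cs IH]]];
  try by exists (maxn B1 B2), (cs1 ++ cs2); apply: join.
- by exists 0, nil.
- by exists 0, nil.
- have [B1 [cs1 bd1]] := bounded_t_exists t1; have [B2 [cs2 bd2]] := bounded_t_exists t2.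
  exists (maxn B1 B2), (cs1 ++ cs2); split.
    by apply: bounded_t_mono bd1; [apply: leq_maxl | apply: sublist_catl].
  by apply: bounded_t_mono bd2; [apply: leq_maxr | apply: sublist_catr].
- apply: bounded_finite => [i B B' cs cs' BB' ss bd | i]; last exact: bounded_t_exists.
  exact: bounded_t_mono BB' ss bd.
- exact: IH.
- by exists (maxn m.+1 B), cs; split; [apply: leq_maxl | apply: bounded_mono IH; rewrite ?leq_maxr].
- by exists (maxn m.+1 B), cs; split; [apply: leq_maxl | apply: bounded_mono IH; rewrite ?leq_maxr].
Qed.

Fixpoint elim_consts_t (k : A -> nat) t : fo_term L :=
  match t with
  | tvar v => tvar v
  | tapp f a =>
      (match f as f0 return ('I_(@far LA f0) -> fo_term L) -> fo_term L with
       | inl g => fun b => @tapp L g b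
       | inr c => fun _ => tvar (k c)
       end) (fun i => elim_consts_t k (a i))
  end.

Fixpoint elim_consts (k : A -> nat) phi : fo_form L :=
  match phi with
  | fFalse => fFalse
  | fTrue => fTrue
  | fEq t1 t2 => fEq (elim_consts_t k t1) (elim_consts_t k t2)
  | fRel r a => @fRel L r (fun i => elim_consts_t k (a i))
  | fNot p => fNot (elim_consts k p)
  | fAnd p q => fAnd (elim_consts k p) (elim_consts k q)
  | fOr p q => fOr (elim_consts k p) (elim_consts k q)
  | fImp p q => fImp (elim_consts k p) (elim_consts k q)
  | fEx m p => fEx m (elim_consts k p)
  | fAll m p => fAll m (elim_consts k p)
  end.

Section Evaluation.
Variables (S : struc L) (cc : A -> S) (B : nat) (cs : list A) (k : A -> nat).

Lemma teval_elim_consts (r r' : nat -> S) t :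
  bounded_t B cs t -> (forall c, List.In c cs -> r' (k c) = cc c) ->
  (forall v, v < B -> r' v = r v) ->
  teval (M := expand_consts cc) r t = teval r' (elim_consts_t k t).
Proof.
move=> + r'_cs r'_r; elim: t => [v /= /r'_r -> // | [g | c] a IH [c_cs a_bd] /=].
  by congr fint; apply/funext => i; apply: IH; apply: a_bd.
by rewrite r'_cs.
Qed.

Hypothesis k_large : forall c, List.In c cs -> B <= k c.

Lemma upd_consts_env (r' : nat -> S) m a : m < B ->
  (forall c, List.In c cs -> r' (k c) = cc c) -> forall c, List.In c cs -> upd r' m a (k c) = cc c.
Proof.
move=> mB r'_cs c c_cs; rewrite /upd; case: eqP => [km | _]; last exact: r'_cs.
by move: (k_large c_cs); rewrite km leqNgt mB.
Qed.

Lemma upd_low_env (r r' : nat -> S) m a :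
  (forall v, v < B -> r' v = r v) -> forall v, v < B -> upd r' m a v = upd r m a v.
Proof. by move=> r'_r v vB; rewrite /upd; case: eqP => // _; apply: r'_r. Qed.

Lemma sat_elim_consts phi (r r' : nat -> S) : bounded B cs phi ->
  (forall c, List.In c cs -> r' (k c) = cc c) -> (forall v, v < B -> r' v = r v) ->
  sat (M := expand_consts cc) r phi <-> sat r' (elim_consts k phi).
Proof.
elim: phi r r' => [| | t1 t2 | R a | p IH | p IHp q IHq | p IHp q IHq | p IHp q IHq
                  | m p IH | m p IH] r r' /=.
- by [].
- by [].
- by move=> [bd1 bd2] r'_cs r'_r; rewrite !(teval_elim_consts _ r'_cs r'_r).
- move=> a_bd r'_cs r'_r.
  by rewrite (funext (fun i => teval_elim_consts (a_bd i) r'_cs r'_r)).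
- by move=> bd r'_cs r'_r; rewrite (IH _ _ bd r'_cs r'_r).
- by move=> [bd1 bd2] r'_cs r'_r; rewrite (IHp _ _ bd1 r'_cs r'_r) (IHq _ _ bd2 r'_cs r'_r).
- by move=> [bd1 bd2] r'_cs r'_r; rewrite (IHp _ _ bd1 r'_cs r'_r) (IHq _ _ bd2 r'_cs r'_r).
- by move=> [bd1 bd2] r'_cs r'_r; rewrite (IHp _ _ bd1 r'_cs r'_r) (IHq _ _ bd2 r'_cs r'_r).
all: move=> [mB bd] r'_cs r'_r.
all: have IHa a := IH _ _ bd (upd_consts_env a mB r'_cs) (upd_low_env m a r'_r).
- by split=> -[a /IHa]; exists a.
- by split=> all_a a; apply/IHa.
Qed.

End Evaluation.

Fixpoint index_of cs (c : A) : nat :=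
  if cs is c' :: cs' then (if pselect (c' = c) then 0 else (index_of cs' c).+1) else 0.

Lemma nth_index_of (X : Type) (x0 : X) (f : A -> X) cs c :
  List.In c cs -> nth x0 (map f cs) (index_of cs c) = f c.
Proof.
elim: cs => [|c' cs IH] //= c_cs; case: pselect => [c'c | c'c] /=; first by rewrite c'c.
by apply: IH; case: c_cs.
Qed.

Definition consts_env (S : Type) B cs (cc : A -> S) (r : nat -> S) (v : nat) : S :=
  if v < B then r v else nth (r v) (map cc cs) (v - B).

Lemma consts_env_low (S : Type) B cs (cc : A -> S) r v : v < B -> consts_env B cs cc r v = r v.
Proof. by rewrite /consts_env => ->. Qed.

Lemma consts_env_const (S : Type) B cs (cc : A -> S) r c :
  List.In c cs -> consts_env B cs cc r (B + index_of cs c) = cc c.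
Proof. by move=> c_cs; rewrite /consts_env ltnNge leq_addr /= addKn nth_index_of. Qed.

End ConstantElimination.

(** * Embedding an extension into an ultrapower *)

Section Interleave.
Variable X : Type.

Definition interleave (B1 B2 : nat) (p1 p2 : nat -> X) (u : nat) : X :=
  let d := u - (B1 + B2) in if odd d then p2 (B2 + d./2) else p1 (B1 + d./2).

Definition shift1 (B1 B2 v : nat) : nat := if v < B1 then v else B1 + B2 + (v - B1).*2.
Definition shift2 (B1 B2 v : nat) : nat := if v < B2 then B1 + v else B1 + B2 + (v - B2).*2.+1.

Lemma env_prefix_shift1 B1 B2 (a p1 p2 : nat -> X) v :
  env_prefix (B1 + B2) a (interleave B1 B2 p1 p2) (shift1 B1 B2 v) = env_prefix B1 a p1 v.
Proof.
rewrite /env_prefix /shift1 /interleave; case: (ltnP v B1) => vB1.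
  by rewrite ltn_addr.
rewrite ltnNge leq_addr /= addKn odd_double; congr p1; lia.
Qed.

Lemma env_prefix_shift2 B1 B2 (a p1 p2 : nat -> X) v :
  env_prefix (B1 + B2) a (interleave B1 B2 p1 p2) (shift2 B1 B2 v)
  = env_prefix B2 (fun u => a (B1 + u)) p2 v.
Proof.
rewrite /env_prefix /shift2 /interleave; case: (ltnP v B2) => vB2.
  by rewrite ltn_add2l vB2.
rewrite ltnNge leq_addr /= addKn /= odd_double /=; congr p2; lia.
Qed.

End Interleave.

Lemma comp_interleave (X Y : Type) (h : X -> Y) B1 B2 (p1 p2 : nat -> X) :
  h \o interleave B1 B2 p1 p2 =1 interleave B1 B2 (h \o p1) (h \o p2).
Proof. by move=> u; rewrite /interleave /=; case: odd. Qed.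

Lemma env_prefix_ord (X : Type) k (w e : nat -> X) (i : 'I_k) : env_prefix k w e i = w i.
Proof. by rewrite /env_prefix ltn_ord. Qed.

Definition tuple_env (X : Type) k (a : 'I_k -> X) (x0 : X) (v : nat) : X :=
  if insub v is Some i then a i else x0.

Lemma tuple_env_ord (X : Type) k (a : 'I_k -> X) x0 (i : 'I_k) : tuple_env a x0 i = a i.
Proof. by rewrite /tuple_env valK. Qed.

Section ExistentialClosure.
Variables (L : lang) (M N : struc L) (h : M -> N).
Hypothesis ex_closed : forall (phi : fo_form L) (e : nat -> M),
  existential phi -> sat (h \o e) phi -> sat e phi.

(* Variables below [fact_size] stand for elements of [N], the others for parameters from [M]. *)
Record fact : Type := Fact {
  fact_form : fo_form L;
  fact_size : nat;
  fact_elts : nat -> N;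
  fact_params : nat -> M;
  fact_qf : qf fact_form;
  fact_holds : sat (env_prefix fact_size fact_elts (h \o fact_params)) fact_form }.

Lemma fact_witness_ex (F : fact) : exists w : nat -> M,
  sat (env_prefix (fact_size F) w (fact_params F))
      (fAnd (fact_form F) (eq_diagram (fact_elts F) (fact_size F))).
Proof.
apply/sat_fExs_iota; apply: ex_closed.
  by apply: existential_fExs; split; [apply: fact_qf | apply: qf_eq_diagram].
apply/sat_fExs_iota; exists (fact_elts F); split; first exact: fact_holds.
by apply/sat_eq_diagram => v v'; rewrite !env_prefix_ord.
Qed.

Definition witness (F : fact) : nat -> M := projT1 (cid (fact_witness_ex F)).

Lemma witness_holds F : sat (env_prefix (fact_size F) (witness F) (fact_params F)) (fact_form F).
Proof. by rewrite /witness; case: cid => w []. Qed.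

Lemma witness_eq F (v v' : 'I_(fact_size F)) :
  fact_elts F v = fact_elts F v' -> witness F v = witness F v'.
Proof.
rewrite /witness; case: cid => w /= [_ /sat_eq_diagram diag] /diag.
by rewrite !env_prefix_ord.
Qed.

Definition default_elt : M := epsilon (dom_inh M) (fun _ => True).

(* The element that the coordinate [F] of the ultrapower assigns to [y]; by
   [witness_eq] it does not depend on the index representing [y] in [F]. *)
Definition pull (y : N) (F : fact) : M :=
  if pselect (exists v : 'I_(fact_size F), fact_elts F v = y) is left ex
  then witness F (projT1 (cid ex)) else default_elt.

Lemma pull_elt F (v : 'I_(fact_size F)) : pull (fact_elts F v) F = witness F v.
Proof.
rewrite /pull; case: pselect => [ex | nex]; last by case: nex; exists v.
by case: cid => v' /= /witness_eq.
Qed.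

Definition realizers (F : fact) : set fact := fun j =>
  sat (env_prefix (fact_size F) (fun v => pull (fact_elts F v) j) (fact_params F)) (fact_form F).

Lemma realizers_self F : realizers F F.
Proof.
apply: eq_sat (witness_holds F) => v; rewrite /env_prefix; case: ltnP => // vF.
exact: esym (pull_elt (Ordinal vF)).
Qed.

Definition fact_and (F1 F2 : fact) : fact.
Proof.
pose B1 := fact_size F1; pose B2 := fact_size F2.
refine (@Fact (fAnd (rename_qf (shift1 B1 B2) (fact_form F1))
                    (rename_qf (shift2 B1 B2) (fact_form F2)))
  (B1 + B2) (env_prefix B1 (fact_elts F1) (fun u => fact_elts F2 (u - B1)))
  (interleave B1 B2 (fact_params F1) (fact_params F2)) (conj (qf_rename _ _) (qf_rename _ _)) _).
split; apply/sat_rename; try exact: fact_qf.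
- apply: eq_sat (fact_holds F1) => v /=.
  rewrite (funext (comp_interleave h _ _ _ _)) env_prefix_shift1.
  by rewrite /env_prefix; case: ifP.
- apply: eq_sat (fact_holds F2) => v /=.
  rewrite (funext (comp_interleave h _ _ _ _)) env_prefix_shift2.
  by rewrite /env_prefix; case: ifP => // _; rewrite ltnNge leq_addr addKn.
Defined.

Lemma realizers_and F1 F2 : realizers (fact_and F1 F2) `<=` realizers F1 `&` realizers F2.
Proof.
move=> j [/sat_rename sat1 /sat_rename sat2]; split.
- apply: eq_sat (sat1 (fact_qf F1)) => v /=; rewrite env_prefix_shift1.
  by rewrite /env_prefix; case: ifP => // ->.
- apply: eq_sat (sat2 (fact_qf F2)) => v /=; rewrite env_prefix_shift2.
  by rewrite /env_prefix; case: ifP => // _; rewrite ltnNge leq_addr addKn.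
Qed.

Definition fact_true : fact := @Fact fTrue 0 (fun _ => h default_elt) (fun _ => default_elt) I I.

Definition fact_filter : set_system fact := filter_from setT realizers.

Lemma fact_filter_proper : ProperFilter fact_filter.
Proof.
apply: filter_from_proper => [|F _]; last by exists F; apply: realizers_self.
apply: filter_fromT_filter; first by exists fact_true.
by move=> F1 F2; exists (fact_and F1 F2); apply: realizers_and.
Qed.

Definition diagram_ultra : set_system fact := projT1 (cid (ultraFilterLemma fact_filter_proper)).

Instance diagram_ultra_ultra : UltraFilter diagram_ultra.
Proof. exact: (projT2 (cid (ultraFilterLemma fact_filter_proper))).1. Qed.

Lemma fact_filter_diagram_ultra : fact_filter `<=` diagram_ultra.
Proof. exact: (projT2 (cid (ultraFilterLemma fact_filter_proper))).2. Qed.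

Lemma pull_holds phi B (eps : nat -> N) (e : nat -> M) :
  qf phi -> sat (env_prefix B eps (h \o e)) phi ->
  diagram_ultra (fun j => sat (env_prefix B (fun v => pull (eps v) j) e) phi).
Proof.
move=> qf_phi holds; apply: fact_filter_diagram_ultra.
exact: (@in_filter_from _ _ setT realizers (@Fact phi B eps e qf_phi holds)).
Qed.

Lemma pull_h a : diagram_ultra (fun j => pull (h a) j = a).
Proof. exact: (@pull_holds (fEq (tvar 0) (tvar 1)) 1 (fun=> h a) (fun=> a) I erefl). Qed.

Lemma pull_neq y y' : y <> y' -> diagram_ultra (fun j => pull y j <> pull y' j).
Proof.
move=> yy'; pose eps v := if v == 0 then y else y'.
exact: (@pull_holds (fNot (fEq (tvar 0) (tvar 1))) 2 eps (fun=> default_elt) I yy').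
Qed.

Lemma pull_fint f (a : 'I_(far f) -> N) :
  diagram_ultra (fun j => pull (@fint L N f a) j = @fint L M f (fun i => pull (a i) j)).
Proof.
have env_a (X : Type) (w e : nat -> X) :
    (fun i : 'I_(far f) => env_prefix (far f).+1 w e i) = (fun i => w i).
  by apply/funext => i; rewrite /env_prefix ltnS ltnW.
have env_last (X : Type) (w e : nat -> X) : env_prefix (far f).+1 w e (far f) = w (far f).
  by rewrite /env_prefix ltnSn.
have eps_a : (fun i : 'I_(far f) => tuple_env a (@fint L N f a) i) = a.
  by apply/funext => i; rewrite tuple_env_ord.
have eps_f : tuple_env a (@fint L N f a) (far f) = @fint L N f a.
  by rewrite /tuple_env insubN // ltnn.
have := @pull_holds (fEq (tapp (fun i : 'I_(far f) => tvar i)) (tvar (far f))) (far f).+1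
  (tuple_env a (@fint L N f a)) (fun=> default_elt) I.
rewrite /= env_a env_last eps_a eps_f => /(_ erefl).
apply: filterS => j /=; rewrite env_a env_last eps_f => <-.
by congr fint; apply/funext => i; rewrite tuple_env_ord.
Qed.

Lemma pull_rint r (a : 'I_(rar r) -> N) :
  diagram_ultra (fun j => @rint L M r (fun i => pull (a i) j) <-> @rint L N r a).
Proof.
have env_a (X : Type) (w e : nat -> X) :
    (fun i : 'I_(rar r) => env_prefix (rar r) w e i) = (fun i => w i).
  by apply/funext => i; rewrite env_prefix_ord.
have pull_a j :
    (fun i : 'I_(rar r) => pull (tuple_env a (h default_elt) i) j) = (fun i => pull (a i) j).
  by apply/funext => i; rewrite tuple_env_ord.
have eps_a : (fun i : 'I_(rar r) => tuple_env a (h default_elt) i) = a.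
  by apply/funext => i; rewrite tuple_env_ord.
have [ra | nra] := pselect (@rint L N r a).
  have := @pull_holds (fRel (fun i : 'I_(rar r) => tvar i)) (rar r) (tuple_env a (h default_elt))
    (fun=> default_elt) I.
  rewrite /= env_a eps_a => /(_ ra).
  by apply: filterS => j /=; rewrite env_a pull_a.
have := @pull_holds (fNot (fRel (fun i : 'I_(rar r) => tvar i))) (rar r)
  (tuple_env a (h default_elt)) (fun=> default_elt) I.
rewrite /= env_a eps_a => /(_ nra).
by apply: filterS => j /=; rewrite env_a pull_a.
Qed.

Definition ultra_embed (y : N) : ultrapower diagram_ultra M := uclass diagram_ultra (pull y).

Lemma ultra_embedP : embedding (M := N) (N := ultrapower diagram_ultra M) ultra_embed.
Proof.
split; [|split].
- move=> y y' /uclass_eqP Uyy'; apply: contrapT => yy'.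
  apply: (filter_const (F := diagram_ultra)).
  by apply: filterS2 Uyy' (pull_neq yy') => j ->.
- move=> f a; rewrite /comp /ultra_embed ultrapower_fint.
  exact/uclass_eqP/pull_fint.
- move=> r a; rewrite /comp /ultra_embed ultrapower_rint.
  split=> [ra | Ura]; first by apply: filterS (pull_rint a) => j ->.
  apply: (filter_const (F := diagram_ultra)).
  by apply: filterS2 Ura (pull_rint a) => j rj /iffLR; apply.
Qed.

Lemma ultra_embed_h a : ultra_embed (h a) = uclass diagram_ultra (fun _ => a).
Proof. exact/uclass_eqP/pull_h. Qed.

End ExistentialClosure.

(** * Existentially closed models have the transfer property *)

Section Forward.
Variables (L : lang) (K : fieldType) (T : theory L) (D : vsdef L K) (C : kconf K)
  (M : struc L) (th : M -> M) (N : struc L) (th' : N -> N) (h : M -> N).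
Hypothesis T_mc : model_complete T.
Hypothesis M_ec : ec_model_TthC T D C th.
Hypothesis N_model : model_TthC T D C th'.
Hypothesis h_emb : embedding (M := expand_theta th) (N := expand_theta th') h.

Lemma ex_closed_theta phi (e : nat -> M) : existential phi ->
  sat (M := expand_theta th') (h \o e) phi -> sat (M := expand_theta th) e phi.
Proof. by case: M_ec => _ ec; apply: ec N_model h_emb phi e. Qed.

Let U := @diagram_ultra _ (expand_theta th) (expand_theta th') h ex_closed_theta.
#[local] Instance U_ultra : UltraFilter U := diagram_ultra_ultra _.
Let MU := ultrapower U M.
Let emb : N -> MU := @ultra_embed _ (expand_theta th) (expand_theta th') h ex_closed_theta.

Definition thU (a : MU) : MU := uclass U (fun j => th (urep a j)).

Lemma thU_uclass (f : _ -> M) : thU (uclass U f) = uclass U (fun j => th (f j)).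
Proof. by apply/uclass_eqP; apply: filterS (uclassK f) => j ->. Qed.

Lemma iter_thU i (f : _ -> M) : iter i thU (uclass U f) = uclass U (fun j => iter i th (f j)).
Proof. by elim: i => //= i ->; rewrite thU_uclass. Qed.

Lemma emb_theta y : emb (th' y) = thU (emb y).
Proof.
have [_ [emb_f _]] := @ultra_embedP _ (expand_theta th) (expand_theta th') h ex_closed_theta.
exact: (emb_f None (fun=> y)).
Qed.

Lemma emb_penv (x : nat -> N) v : emb (penv th' x v) = penv thU (emb \o x) v.
Proof. by rewrite /penv; case: Cantor.of_nat => k i /=; elim: i => //= i <-; rewrite emb_theta. Qed.

Lemma emb_const a : emb (h a) = uclass U (fun=> a).
Proof. exact: (@ultra_embed_h _ (expand_theta th) (expand_theta th') h ex_closed_theta). Qed.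

Lemma emb_embedding : embedding (M := N) (N := MU) emb.
Proof.
have [emb_inj [emb_f emb_r]] :=
  @ultra_embedP _ (expand_theta th) (expand_theta th') h ex_closed_theta.
by split=> //; split=> [f a | r a]; [apply: (emb_f (Some f) a) | apply: (emb_r r a)].
Qed.

Lemma ultrapower_model : is_model T MU.
Proof.
move=> phi T_phi es; rewrite (los phi (E := fun j v => urep (es v) j)) => [|v]; last exact: urepK.
by apply: ultra_all => j; case: M_ec => -[M_T _] _; apply: M_T.
Qed.

Lemma emb_elementary phi (r : nat -> N) : sat r phi <-> sat (emb \o r) phi.
Proof. by case: N_model => N_T _; apply: T_mc N_T ultrapower_model emb_embedding phi r. Qed.

Lemma emb_inV y : inV D y -> U (fun j => inV D (urep (emb y) j)).
Proof.
move=> /(emb_elementary (vs_set D) (env1 y)).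
by rewrite (los _ (E := fun j => env1 (urep (emb y) j))) // => v; rewrite urepK.
Qed.

Lemma exV_transfer_of_ec n (psi : fo_form (lang_consts L M)) (x : nat -> N) :
  (forall k, k < n -> inV D (x k)) -> sat (M := expand_consts h) (penv th' x) psi ->
  sat_exV_theta D th id n psi.
Proof.
move=> xV psi_x; have [B [cs bd]] := bounded_exists psi.
(* Model completeness speaks about L-formulas, so the constants of [psi] become variables. *)
pose cvar c := B + index_of cs c.
have cvar_large c : List.In c cs -> B <= cvar c by move=> _; apply: leq_addr.
pose rN := consts_env B cs h (penv th' x).
have /emb_elementary psi_emb : sat rN (elim_consts cvar psi).
  by rewrite -(sat_elim_consts cvar_large bd (consts_env_const B h _) (consts_env_low cs h _)).
have rN_cs c : List.In c cs -> (emb \o rN) (cvar c) = uclass U (fun=> c).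
  by move=> c_cs; rewrite /= /rN /cvar consts_env_const // emb_const.
have rN_low v : v < B -> (emb \o rN) v = penv thU (emb \o x) v.
  by move=> vB; rewrite /= /rN consts_env_low // emb_penv.
have E_emb v :
    uclass U (fun j => penv th (fun m => urep (emb (x m)) j) v) = penv thU (emb \o x) v.
  by rewrite /penv; case: Cantor.of_nat => m i; rewrite -iter_thU urepK.
move: psi_emb; rewrite -(sat_elim_consts (S := MU) cvar_large bd rN_cs rN_low).
move=> /(sat_ultrapower_consts (cc := id)).
rewrite (los (S := expand_consts id) psi E_emb) => U_psi.
have U_V : U (fun j => forall k : 'I_n, inV D (urep (emb (x k)) j)).
  by apply: filter_forall => k; apply: emb_inV; apply: xV.
have [j [psi_j V_j]] := filter_ex (filterI U_psi U_V).
by exists (fun k => urep (emb (x k)) j); split=> // k kn; apply: (V_j (Ordinal kn)).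
Qed.

End Forward.

(** * Translating existential L_theta-formulas into placeholder formulas *)

Section Lift.
Variables (L : lang) (A : Type).
Local Notation LA := (lang_consts L A).

Fixpoint lift_consts_t (t : fo_term L) : fo_term LA :=
  match t with tvar v => tvar v | tapp f a => @tapp LA (inl f) (fun i => lift_consts_t (a i)) end.

Fixpoint lift_consts (phi : fo_form L) : fo_form LA :=
  match phi with
  | fFalse => fFalse
  | fTrue => fTrue
  | fEq t1 t2 => fEq (lift_consts_t t1) (lift_consts_t t2)
  | fRel r a => @fRel LA r (fun i => lift_consts_t (a i))
  | fNot p => fNot (lift_consts p)
  | fAnd p q => fAnd (lift_consts p) (lift_consts q)
  | fOr p q => fOr (lift_consts p) (lift_consts q)
  | fImp p q => fImp (lift_consts p) (lift_consts q)
  | fEx m p => fEx m (lift_consts p)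
  | fAll m p => fAll m (lift_consts p)
  end.

Lemma teval_lift_consts (S : struc L) (cc : A -> S) (r : nat -> S) t :
  teval (M := expand_consts cc) r (lift_consts_t t) = teval r t.
Proof. by elim: t => //= f a IH; congr fint; apply/funext => i; apply: IH. Qed.

Lemma sat_lift_consts (S : struc L) (cc : A -> S) phi (r : nat -> S) :
  sat (M := expand_consts cc) r (lift_consts phi) <-> sat r phi.
Proof.
elim: phi r => [| | t1 t2 | R a | p IH | p IHp q IHq | p IHp q IHq | p IHp q IHq
               | m p IH | m p IH] r //=.
- by rewrite !teval_lift_consts.
- by rewrite (funext (fun i => teval_lift_consts cc r (a i))).
- by rewrite IH.
- by rewrite IHp IHq.
- by rewrite IHp IHq.
- by rewrite IHp IHq.
- by split=> -[a /IH]; exists a.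
- by split=> all_a a; apply/IH.
Qed.

Lemma tfree_lift_consts v t : tfree v (lift_consts_t t) -> tfree v t.
Proof. by elim: t => //= f a IH [i /IH]; exists i. Qed.

Lemma ffree_lift_consts v phi : ffree v (lift_consts phi) -> ffree v phi.
Proof.
elim: phi => //= [t1 t2 | r a | p IHp q IHq | p IHp q IHq | p IHp q IHq | m p IH | m p IH].
- by case=> /tfree_lift_consts; [left | right].
- by move=> [i /tfree_lift_consts]; exists i.
- by case=> [/IHp | /IHq]; [left | right].
- by case=> [/IHp | /IHq]; [left | right].
- by case=> [/IHp | /IHq]; [left | right].
- by move=> [mv /IH].
- by move=> [mv /IH].
Qed.

End Lift.

Fixpoint code (p : seq nat) : nat :=
  if p is i :: p' then (Cantor.to_nat (i, code p')).+1 else 0.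

(* The fuel only makes the recursion of the inverse of [code] structural. *)
Fixpoint decode_fuel (fuel k : nat) : seq nat :=
  match fuel, k with
  | fuel'.+1, k'.+1 => let: (i, m) := Cantor.of_nat k' in i :: decode_fuel fuel' m
  | _, _ => [::]
  end.

Definition decode (k : nat) : seq nat := decode_fuel k k.

Lemma codeK : cancel code decode.
Proof.
suff fuel_ok p fuel : code p <= fuel -> decode_fuel fuel (code p) = p by move=> p; apply: fuel_ok.
elim: p fuel => [|i p IH] [|fuel] // pf.
have -> : decode_fuel fuel.+1 (code (i :: p))
          = let: (i', m) := Cantor.of_nat (Cantor.to_nat (i, code p)) in i' :: decode_fuel fuel m.
  by [].
rewrite Cantor.cancel_of_to IH //.
by have := Cantor.to_nat_non_decreasing i (code p); move: pf => /=; lia.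
Qed.

Lemma pvarK k i : Cantor.of_nat (pvar k i) = (k, i).
Proof. exact: Cantor.cancel_of_to. Qed.

Lemma pvar_inj k i k' i' : pvar k i = pvar k' i' -> k = k' /\ i = i'.
Proof. by move=> /(congr1 Cantor.of_nat); rewrite !pvarK => -[]. Qed.

Section Translation.
Variables (L : lang) (M : struc L).
Local Notation Lt := (lang_theta L).
Local Notation LM := (lang_consts L M).
Variables (n : nat) (ys : seq nat) (e : nat -> M) (z : nat) (zeroM : M) (Vform : fo_form L).

(* The theta-occurrence at the path [p] (child indices, innermost first) is
   represented by the placeholders x^0_c and x^1_c with c = code p, which the
   translation keeps below [n]; a variable [v] of [ys] becomes the placeholder
   [yvar v] beyond [n], to be quantified again, and any other variable [v] the
   constant [e v]. *)
Definition yvar (v : nat) : nat := pvar (n + v.*2) 0.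

Definition const_t (a : M) : fo_term LM := @tapp LM (inr a) (fun _ => tvar 0).

(* The argument [s] of the theta-occurrence with code [c] is [x^0_c], or it lies
   outside [V] and [x^1_c] is zero; [x^1_c] then stands for theta applied to [s]. *)
Definition theta_cond (s : fo_term LM) (c : nat) : fo_form LM :=
  fOr (fEq s (tvar (pvar c 0)))
      (fAnd (fEx z (fAnd (fEq (tvar z) s) (fNot (@lift_consts L M (rename_free z [::] Vform)))))
            (fEq (tvar (pvar c 1)) (const_t zeroM))).

Fixpoint tr_t (p : seq nat) (t : fo_term Lt) : fo_term LM :=
  match t with
  | tvar v => if v \in ys then tvar (yvar v) else const_t (e v)
  | tapp f a =>
    (match f as f0 return ('I_(@far Lt f0) -> fo_term LM) -> fo_term LM with
     | None => fun _ => tvar (pvar (code p) 1)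
     | Some g => fun b => @tapp LM (inl g) b
     end) (fun i => tr_t (nat_of_ord i :: p) (a i))
  end.

Fixpoint side_t (p : seq nat) (t : fo_term Lt) : fo_form LM :=
  match t with
  | tvar _ => fTrue
  | tapp f a =>
    (match f as f0 return ('I_(@far Lt f0) -> fo_form LM) -> ('I_(@far Lt f0) -> fo_term LM)
                          -> fo_form LM with
     | None => fun s b => fAnd (s ord0) (theta_cond (b ord0) (code p))
     | Some g => fun s _ => fAnds s
     end) (fun i => side_t (nat_of_ord i :: p) (a i)) (fun i => tr_t (nat_of_ord i :: p) (a i))
  end.

Fixpoint code_bound_t (p : seq nat) (t : fo_term Lt) : nat :=
  match t with
  | tvar _ => 0
  | tapp f a =>
    (match f as f0 return ('I_(@far Lt f0) -> nat) -> nat with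
     | None => fun b => maxn (code p) (b ord0)
     | Some g => fun b => \max_i b i
     end) (fun i => code_bound_t (nat_of_ord i :: p) (a i))
  end.

Fixpoint tr (p : seq nat) (phi : fo_form Lt) : fo_form LM :=
  match phi with
  | fFalse => fFalse
  | fTrue => fTrue
  | fEq t1 t2 => fEq (tr_t (0 :: p) t1) (tr_t (1 :: p) t2)
  | fRel r a => @fRel LM r (fun i => tr_t (nat_of_ord i :: p) (a i))
  | fNot q => fNot (tr (0 :: p) q)
  | fAnd q1 q2 => fAnd (tr (0 :: p) q1) (tr (1 :: p) q2)
  | fOr q1 q2 => fOr (tr (0 :: p) q1) (tr (1 :: p) q2)
  | fImp q1 q2 => fImp (tr (0 :: p) q1) (tr (1 :: p) q2)
  | fEx _ _ | fAll _ _ => fFalse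
  end.

Fixpoint side (p : seq nat) (phi : fo_form Lt) : fo_form LM :=
  match phi with
  | fEq t1 t2 => fAnd (side_t (0 :: p) t1) (side_t (1 :: p) t2)
  | fRel r a => fAnds (fun i => side_t (nat_of_ord i :: p) (a i))
  | fNot q => side (0 :: p) q
  | fAnd q1 q2 | fOr q1 q2 | fImp q1 q2 => fAnd (side (0 :: p) q1) (side (1 :: p) q2)
  | _ => fTrue
  end.

Fixpoint code_bound (p : seq nat) (phi : fo_form Lt) : nat :=
  match phi with
  | fEq t1 t2 => maxn (code_bound_t (0 :: p) t1) (code_bound_t (1 :: p) t2)
  | fRel r a => \max_(i < rar r) code_bound_t (nat_of_ord i :: p) (a i)
  | fNot q => code_bound (0 :: p) q
  | fAnd q1 q2 | fOr q1 q2 | fImp q1 q2 => maxn (code_bound (0 :: p) q1) (code_bound (1 :: p) q2)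
  | _ => 0
  end.

Definition placeholder_var (B w : nat) : Prop :=
  (exists2 u, u \in ys & w = yvar u) \/ (exists c i, c <= B /\ w = pvar c i).

Lemma placeholder_var_mono B B' w : B <= B' -> placeholder_var B w -> placeholder_var B' w.
Proof.
move=> BB' [y_w | [c [i [cB ->]]]]; first by left.
by right; exists c, i; split=> //; apply: leq_trans BB'.
Qed.

Lemma placeholder_var_maxl B1 B2 w : placeholder_var B1 w -> placeholder_var (maxn B1 B2) w.
Proof. by apply: placeholder_var_mono; apply: leq_maxl. Qed.

Lemma placeholder_var_maxr B1 B2 w : placeholder_var B2 w -> placeholder_var (maxn B1 B2) w.
Proof. by apply: placeholder_var_mono; apply: leq_maxr. Qed.

Lemma tfree_const_t w a : ~ tfree w (const_t a).
Proof. by move=> [[]]. Qed.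

Lemma tfree_tr_t p t w : tfree w (tr_t p t) ->
  (exists2 u, u \in ys & w = yvar u) \/ (exists2 c, c <= code_bound_t p t & w = pvar c 1).
Proof.
elim: t p => [v | [g |] a IH] p /=.
- by case: ifP => [v_ys /= <- | _ /tfree_const_t] //; left; exists v.
- move=> [i /IH [y_w | [c c_bd ->]]]; [by left | right; exists c => //].
  by apply: leq_trans c_bd _; apply: leq_bigmax.
- by move=> <-; right; exists (code p); rewrite ?leq_maxl.
Qed.

Lemma placeholder_tr_t p t w : tfree w (tr_t p t) -> placeholder_var (code_bound_t p t) w.
Proof. by move=> /tfree_tr_t [y_w | [c c_bd ->]]; [left | right; exists c, 1]. Qed.

Hypothesis z_yvar : forall u, z <> yvar u.
Hypothesis z_pvar : forall c, z <> pvar c 1.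
Hypothesis z_bound : bound_max Vform < z.

Lemma z_notin_tr_t p t : ~ tfree z (tr_t p t).
Proof. by move/tfree_tr_t => [[u _ /z_yvar] | [c _ /z_pvar]]. Qed.

Lemma ffree_theta_cond B s c w : c <= B -> ~ tfree z s ->
  (forall w, tfree w s -> placeholder_var B w) -> ffree w (theta_cond s c) -> placeholder_var B w.
Proof.
move=> cB z_s s_var /= [[/s_var // | <-] | [[zw free_w] | [<- | /tfree_const_t //]]].
- by right; exists c, 0.
- by case: free_w => [[wz | /s_var //] | /ffree_lift_consts /ffree_rename_free [] // wz];
    case: zw.
- by right; exists c, 1.
Qed.

Lemma ffree_side_t p t w : ffree w (side_t p t) -> placeholder_var (code_bound_t p t) w.
Proof.
elim: t p => [v | [g |] a IH] p //=.
  by move=> /ffree_fAnds [i /IH]; apply: placeholder_var_mono; apply: leq_bigmax.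
case=> [/IH | ]; first by apply: placeholder_var_mono; apply: leq_maxr.
apply: ffree_theta_cond; [exact: leq_maxl | exact: z_notin_tr_t |].
move=> w' /placeholder_tr_t; apply: placeholder_var_mono; apply: leq_maxr.
Qed.

Lemma ffree_tr p phi w : ffree w (tr p phi) -> placeholder_var (code_bound p phi) w.
Proof.
elim: phi p => //= [t1 t2 | r a | q IH | q1 IH1 q2 IH2 | q1 IH1 q2 IH2 | q1 IH1 q2 IH2] p.
- by case=> /placeholder_tr_t; [apply: placeholder_var_maxl | apply: placeholder_var_maxr].
- move=> [i /placeholder_tr_t]; apply: placeholder_var_mono.
  exact: leq_bigmax.
- exact: IH.
all: by case=> [/IH1 | /IH2]; [apply: placeholder_var_maxl | apply: placeholder_var_maxr].
Qed.

Lemma ffree_side p phi w : ffree w (side p phi) -> placeholder_var (code_bound p phi) w.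
Proof.
elim: phi p => //= [t1 t2 | r a | q IH | q1 IH1 q2 IH2 | q1 IH1 q2 IH2 | q1 IH1 q2 IH2] p.
- by case=> /ffree_side_t; [apply: placeholder_var_maxl | apply: placeholder_var_maxr].
- move=> /ffree_fAnds [i /ffree_side_t]; apply: placeholder_var_mono.
  exact: leq_bigmax.
- exact: IH.
all: by case=> [/IH1 | /IH2]; [apply: placeholder_var_maxl | apply: placeholder_var_maxr].
Qed.

Section Sound.
Variable th : M -> M.
Hypothesis th_out : forall x, ~ sat (env1 x) Vform -> th x = zeroM.
Local Notation MM := (@expand_consts L M M id).
Local Notation Mth := (expand_theta th).

Definition env_M (r : nat -> M) : nat -> M := fun v => if v \in ys then r (yvar v) else e v.

Definition linked_M (B : nat) (r : nat -> M) : Prop :=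
  forall c, c <= B -> r (pvar c 1) = th (r (pvar c 0)).

Lemma linked_M_mono B B' r : B <= B' -> linked_M B' r -> linked_M B r.
Proof. by move=> BB' lk c cB; apply: lk; apply: leq_trans BB'. Qed.

Lemma theta_cond_sound (r : nat -> M) s c : r (pvar c 1) = th (r (pvar c 0)) -> ~ tfree z s ->
  sat (M := MM) r (theta_cond s c) -> r (pvar c 1) = th (teval (M := MM) r s).
Proof.
move=> lk z_s /= [E | [[a [Ea out_a]] ->]]; first by rewrite lk E.
move: Ea; rewrite /= teval_upd_notfree // {1}/upd eqxx => <-.
rewrite th_out // => V_a; apply: out_a.
by rewrite sat_lift_consts sat_rename_free // /upd eqxx.
Qed.

Lemma sound_t p t (r : nat -> M) : linked_M (code_bound_t p t) r ->
  sat (M := MM) r (side_t p t) -> teval (M := MM) r (tr_t p t) = teval (M := Mth) (env_M r) t.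
Proof.
elim: t p => [v | [g |] a IH] p lk /=; first by rewrite /env_M; case: ifP.
  move=> /sat_fAnds side_a; congr fint; apply/funext => i.
  by apply: IH (side_a i); apply: linked_M_mono lk; apply: leq_bigmax.
move=> [side_a cond_a].
rewrite (theta_cond_sound (lk _ (leq_maxl _ _)) (@z_notin_tr_t (0 :: p) (a ord0)) cond_a).
by rewrite (IH _ _ (linked_M_mono (leq_maxr _ _) lk) side_a).
Qed.

Lemma sound p phi (r : nat -> M) : qf phi -> linked_M (code_bound p phi) r ->
  sat (M := MM) r (side p phi) -> (sat (M := MM) r (tr p phi) <-> sat (M := Mth) (env_M r) phi).
Proof.
elim: phi p => //= [t1 t2 | R a | q IH | q1 IH1 q2 IH2 | q1 IH1 q2 IH2 | q1 IH1 q2 IH2] p.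
- move=> _ lk [side1 side2].
  rewrite (sound_t (linked_M_mono (leq_maxl _ _) lk) side1).
  by rewrite (sound_t (linked_M_mono (leq_maxr _ _) lk) side2).
- move=> _ lk /sat_fAnds side_a.
  suff -> : (fun i => teval (M := MM) r (tr_t (nat_of_ord i :: p) (a i)))
          = (fun i => teval (M := Mth) (env_M r) (a i)) by [].
  apply/funext => i; apply: sound_t (side_a i).
  by apply: linked_M_mono lk; apply: leq_bigmax.
- by move=> qf_q lk side_q; rewrite IH.
all: move=> [qf1 qf2] lk [side1 side2].
all: rewrite (IH1 _ qf1 (linked_M_mono (leq_maxl _ _) lk) side1).
all: by rewrite (IH2 _ qf2 (linked_M_mono (leq_maxr _ _) lk) side2).
Qed.

End Sound.

Section Complete.
Variables (N : struc L) (th' : N -> N) (h : M -> N) (zeroN : N).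
Hypothesis h_zero : h zeroM = zeroN.
Hypothesis th'_zero : th' zeroN = zeroN.
Hypothesis th'_out : forall x, ~ sat (env1 x) Vform -> th' x = zeroN.
Local Notation NM := (@expand_consts L M N h).
Local Notation Nth := (expand_theta th').

Definition env_N (r : nat -> N) : nat -> N := fun v => if v \in ys then r (yvar v) else h (e v).

Definition proj_V (s : N) : N := if pselect (sat (env1 s) Vform) then s else zeroN.

(* The argument, projected to [V], of the theta-occurrence at the path [l] (root first). *)
Fixpoint theta_arg_t (eps : nat -> N) (t : fo_term Lt) (l : seq nat) : N :=
  match t, l with
  | tvar _, _ => zeroN
  | tapp f a, [::] =>
      (match f as f0 return ('I_(@far Lt f0) -> fo_term Lt) -> N with
       | None => fun a => proj_V (teval (M := Nth) eps (a ord0))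
       | Some _ => fun _ => zeroN
       end) a
  | tapp f a, i :: l' => if insub i is Some j then theta_arg_t eps (a j) l' else zeroN
  end.

Fixpoint theta_arg (eps : nat -> N) (phi : fo_form Lt) (l : seq nat) : N :=
  match l, phi with
  | [::], _ => zeroN
  | i :: l', fEq t1 t2 => if i == 0 then theta_arg_t eps t1 l' else theta_arg_t eps t2 l'
  | i :: l', fRel r a => if insub i is Some j then theta_arg_t eps (a j) l' else zeroN
  | i :: l', fNot q => theta_arg eps q l'
  | i :: l', (fAnd q1 q2 | fOr q1 q2 | fImp q1 q2) =>
      if i == 0 then theta_arg eps q1 l' else theta_arg eps q2 l'
  | _, _ => zeroN
  end.

Lemma theta_arg_t_in eps t l : sat (env1 zeroN) Vform -> sat (env1 (theta_arg_t eps t l)) Vform.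
Proof.
move=> V0; elim: t l => [v | [g |] a IH] [|i l] //=; try by case: insub.
by rewrite /proj_V; case: pselect.
Qed.

Lemma theta_arg_in eps phi l : sat (env1 zeroN) Vform -> sat (env1 (theta_arg eps phi l)) Vform.
Proof.
move=> V0; elim: phi l => [| | t1 t2 | r a | q IH | q1 IH1 q2 IH2 | q1 IH1 q2 IH2 | q1 IH1 q2 IH2
                          | m q IH | m q IH] [|i l] //=.
- by case: ifP => _; apply: theta_arg_t_in.
- by case: insub => // j; apply: theta_arg_t_in.
all: by case: ifP => _; [apply: IH1 | apply: IH2].
Qed.

Definition linked_N (B : nat) (r X : nat -> N) : Prop :=
  forall c, c <= B -> r (pvar c 0) = X c /\ r (pvar c 1) = th' (X c).

Lemma linked_N_mono B B' r X : B <= B' -> linked_N B' r X -> linked_N B r X.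
Proof. by move=> BB' lk c cB; apply: lk; apply: leq_trans BB'. Qed.

Lemma code_child (X : nat -> N) p i (F G : seq nat -> N) :
  (forall q, X (code (q ++ p)) = F (rev q)) -> (forall l, F (i :: l) = G l) ->
  forall q, X (code (q ++ i :: p)) = G (rev q).
Proof. by move=> XF FG q; have := XF (rcons q i); rewrite rev_rcons cat_rcons FG. Qed.

Lemma theta_cond_complete (r : nat -> N) s c : ~ tfree z s ->
  r (pvar c 0) = proj_V (teval (M := NM) r s) ->
  r (pvar c 1) = th' (proj_V (teval (M := NM) r s)) ->
  sat (M := NM) r (theta_cond s c) /\ r (pvar c 1) = th' (teval (M := NM) r s).
Proof.
move=> z_s; rewrite /proj_V /theta_cond /=; case: pselect => [V_s | out_s] r0 r1.
  by split=> //; left; rewrite r0.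
rewrite r1 th'_zero th'_out //; split=> //; right; split; last by rewrite /= h_zero.
exists (teval (M := NM) r s); rewrite /= teval_upd_notfree // {1}/upd eqxx; split=> //.
by rewrite sat_lift_consts sat_rename_free // /upd eqxx.
Qed.

Lemma complete_t p t (r X : nat -> N) : linked_N (code_bound_t p t) r X ->
  (forall q, X (code (q ++ p)) = theta_arg_t (env_N r) t (rev q)) ->
  sat (M := NM) r (side_t p t) /\ teval (M := NM) r (tr_t p t) = teval (M := Nth) (env_N r) t.
Proof.
elim: t p => [v | [g |] a IH] p lk X_p /=; first by split=> //; rewrite /env_N; case: ifP.
  have IHa i : sat (M := NM) r (side_t (nat_of_ord i :: p) (a i)) /\
      teval (M := NM) r (tr_t (nat_of_ord i :: p) (a i)) = teval (M := Nth) (env_N r) (a i).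
    apply: IH; first by apply: linked_N_mono lk; apply: leq_bigmax.
    by apply: (code_child X_p) => l /=; rewrite valK.
  split; first by apply/sat_fAnds => i; case: (IHa i).
  by congr fint; apply/funext => i; case: (IHa i).
have X_a q : X (code (q ++ 0 :: p)) = theta_arg_t (env_N r) (a ord0) (rev q).
  by apply: (code_child X_p) => l /=; rewrite (valK (ord0 : 'I_1)).
have [side_a tr_a] := IH ord0 (0 :: p) (linked_N_mono (leq_maxr _ _) lk) X_a.
have := X_p [::]; rewrite /= -tr_a => X_c.
have [r0 r1] := lk _ (leq_maxl _ _); rewrite X_c in r0 r1.
have [cond_a r1'] := theta_cond_complete (@z_notin_tr_t (0 :: p) (a ord0)) r0 r1.
by split; [split; [exact: side_a | exact: cond_a] | rewrite r1' tr_a].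
Qed.

Lemma complete p phi (r X : nat -> N) : qf phi -> linked_N (code_bound p phi) r X ->
  (forall q, X (code (q ++ p)) = theta_arg (env_N r) phi (rev q)) ->
  sat (M := NM) r (side p phi) /\ (sat (M := NM) r (tr p phi) <-> sat (M := Nth) (env_N r) phi).
Proof.
elim: phi p => [| | t1 t2 | R a | q IH | q1 IH1 q2 IH2 | q1 IH1 q2 IH2 | q1 IH1 q2 IH2
               | m q IH | m q IH] p; try by move=> /=.
- move=> _ lk X_p /=.
  have [side1 ->] := complete_t (linked_N_mono (leq_maxl _ _) lk)
    (code_child (i := 0) (G := theta_arg_t (env_N r) t1) X_p (fun l => erefl)).
  by have [side2 ->] := complete_t (linked_N_mono (leq_maxr _ _) lk)
    (code_child (i := 1) (G := theta_arg_t (env_N r) t2) X_p (fun l => erefl)).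
- move=> _ lk X_p /=.
  have IHa i : sat (M := NM) r (side_t (nat_of_ord i :: p) (a i)) /\
      teval (M := NM) r (tr_t (nat_of_ord i :: p) (a i)) = teval (M := Nth) (env_N r) (a i).
    apply: complete_t; first by apply: linked_N_mono lk; apply: leq_bigmax.
    by apply: (code_child X_p) => l /=; rewrite valK.
  split; first by apply/sat_fAnds => i; case: (IHa i).
  suff -> : (fun i => teval (M := NM) r (tr_t (nat_of_ord i :: p) (a i)))
          = (fun i => teval (M := Nth) (env_N r) (a i)) by [].
  by apply/funext => i; case: (IHa i).
- move=> qf_q lk X_p /=.
  by have [side_q ->] := IH (0 :: p) qf_q lk
    (code_child (i := 0) (G := theta_arg (env_N r) q) X_p (fun l => erefl)).
all: move=> [qf1 qf2] lk X_p /=.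
all: have [side1 ->] := IH1 (0 :: p) qf1 (linked_N_mono (leq_maxl _ _) lk)
       (code_child (i := 0) (G := theta_arg (env_N r) q1) X_p (fun l => erefl)).
all: by have [side2 ->] := IH2 (1 :: p) qf2 (linked_N_mono (leq_maxr _ _) lk)
       (code_child (i := 1) (G := theta_arg (env_N r) q2) X_p (fun l => erefl)).
Qed.

End Complete.

End Translation.

(** * The transfer property implies existential closedness *)

Section VectorSpaceZero.
Variables (L : lang) (K : fieldType) (D : vsdef L K) (S : struc L).
Hypothesis S_vs : defines_nontrivial_vs D S.

Lemma vzero_spec : sat (env1 (vzero D S)) (vs_zero D).
Proof.
case: S_vs => -[z0 [z0_zero _]] _.
exact: (epsilon_spec (dom_inh S) (fun z => sat (env1 z) (vs_zero D)) (ex_intro _ z0 z0_zero)).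
Qed.

Lemma vzero_unique x : sat (env1 x) (vs_zero D) -> x = vzero D S.
Proof.
by case: S_vs => -[z0 [_ uniq_z0]] _ /uniq_z0 <-; apply: uniq_z0; apply: vzero_spec.
Qed.

Lemma inV_vzero : inV D (vzero D S).
Proof. by case: S_vs => _ []. Qed.

Lemma linear_vzero (t : S -> S) : theta_axioms D t -> t (vzero D S) = vzero D S.
Proof.
case: S_vs => _ [V0 [_ [_ [_ [_ [add_assoc [add_comm [add0 [addN _]]]]]]]]] [tV [t_add _]].
set w := t (vzero D S).
have Vw : inV D w := tV _ V0.
have ww : w = vadd D w w by rewrite -t_add // add0.
have [y [Vy wy]] := addN _ Vw.
transitivity (vadd D (vzero D S) w); first by rewrite add0.
by rewrite add_comm // -{1}wy add_assoc // -ww.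
Qed.

End VectorSpaceZero.

Lemma embedding_reduct (L : lang) (M N : struc L) (th : M -> M) (th' : N -> N) (h : M -> N) :
  embedding (M := expand_theta th) (N := expand_theta th') h -> embedding (M := M) (N := N) h.
Proof.
by case=> h_inj [h_f h_r]; split=> //; split=> [f a | r a]; [apply: (h_f (Some f)) | apply: h_r].
Qed.

Lemma embedding_vzero (L : lang) (K : fieldType) (T : theory L) (D : vsdef L K)
    (M N : struc L) (h : M -> N) :
  model_complete T -> (forall S, is_model T S -> defines_nontrivial_vs D S) ->
  is_model T M -> is_model T N -> embedding h -> h (vzero D M) = vzero D N.
Proof.
move=> T_mc T_vs M_T N_T h_emb; apply: vzero_unique; first exact: T_vs.
exact/(T_mc _ _ _ M_T N_T h_emb)/vzero_spec/T_vs.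
Qed.

Section Backward.
Variables (L : lang) (K : fieldType) (D : vsdef L K) (M : struc L)
  (ys : seq nat) (chi : fo_form (lang_theta L)) (e : nat -> M).
Hypothesis chi_qf : qf chi.
Local Notation Vform := (vs_set D).
Local Notation zeroM := (vzero D M).

Definition tr_size : nat := (code_bound [::] chi).+1.

(* Even placeholders beyond [tr_size] are taken by [yvar], so [tr_aux] is fresh. *)
Definition tr_aux : nat := pvar (tr_size + (bound_max Vform).*2.+1) 0.

Lemma tr_aux_yvar u : tr_aux <> yvar tr_size u.
Proof. by move=> /pvar_inj [E _]; lia. Qed.

Lemma tr_aux_pvar c : tr_aux <> pvar c 1.
Proof. by move=> /pvar_inj []. Qed.

Lemma tr_aux_bound : bound_max Vform < tr_aux.
Proof.
have := Cantor.to_nat_non_decreasing (tr_size + (bound_max Vform).*2.+1) 0.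
by rewrite /tr_aux /pvar; lia.
Qed.

Definition tr_exV : fo_form (lang_consts L M) :=
  fExs (map (yvar tr_size) ys)
       (fAnd (side tr_size ys e tr_aux zeroM Vform [::] chi) (tr tr_size ys e [::] chi)).

Lemma pvar_notin_yvars c i : c < tr_size -> pvar c i \notin map (yvar tr_size) ys.
Proof. by move=> c_n; apply/mapP => -[u _ /pvar_inj [E _]]; lia. Qed.

Lemma placeholder_tr_exV : placeholder_formula tr_size tr_exV.
Proof.
move=> v /ffree_fExs [v_ys v_free].
have : placeholder_var tr_size ys (code_bound [::] chi) v.
  by case: v_free => [/(ffree_side tr_aux_yvar tr_aux_pvar) | /ffree_tr].
case=> [[u u_ys v_u] | [c [i [c_bd ->]]]]; last by rewrite pvarK.
by move: v_ys; rewrite v_u map_f.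
Qed.

Lemma tr_exV_complete (N : struc L) (th' : N -> N) (h : M -> N) :
  defines_nontrivial_vs D N -> theta_axioms D th' -> h zeroM = vzero D N ->
  sat (M := expand_theta th') (h \o e) (fExs ys chi) -> sat_exV_theta D th' h tr_size tr_exV.
Proof.
move=> N_vs th'_lin h_zero /sat_fExs [b chi_b].
have th'_out : forall x, ~ inV D x -> th' x = vzero D N by case: th'_lin => _ [_ []].
pose epsN u := if u \in ys then b u else h (e u).
pose X k := theta_arg Vform th' (vzero D N) epsN chi (rev (decode k)).
exists X; split=> [k _ | ]; first exact/theta_arg_in/inV_vzero.
apply/sat_fExs; exists (fun u => b (((Cantor.of_nat u).1 - tr_size)./2)).
set r := fun u => if u \in _ then _ else _.
have r_y : env_N tr_size ys e h r = epsN.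
  apply/funext => v; rewrite /env_N /r /epsN; case: ifP => // v_ys.
  by rewrite map_f // /yvar pvarK /=; congr b; lia.
have lk : linked_N th' (code_bound [::] chi) r X.
  move=> c c_bd; have c_n : c < tr_size by rewrite ltnS.
  by rewrite /r (negbTE (pvar_notin_yvars 0 c_n)) (negbTE (pvar_notin_yvars 1 c_n)) /penv !pvarK.
have X_paths q :
    X (code (q ++ [::])) = theta_arg Vform th' (vzero D N) (env_N tr_size ys e h r) chi (rev q).
  by rewrite cats0 /X codeK r_y.
have [side_r tr_r] := complete tr_aux_yvar tr_aux_pvar tr_aux_bound h_zero
  (linear_vzero N_vs th'_lin) th'_out chi_qf lk X_paths.
by split=> //; apply/tr_r; rewrite r_y.
Qed.

Lemma tr_exV_sound (th : M -> M) : theta_axioms D th ->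
  sat_exV_theta D th id tr_size tr_exV -> sat (M := expand_theta th) e (fExs ys chi).
Proof.
move=> th_lin [x [_ /sat_fExs [f [side_r tr_r]]]].
have th_out : forall x, ~ inV D x -> th x = zeroM by case: th_lin => _ [_ []].
set r := fun u => if u \in _ then _ else _ in side_r tr_r.
have lk : linked_M th (code_bound [::] chi) r.
  move=> c c_bd; have c_n : c < tr_size by rewrite ltnS.
  by rewrite /r (negbTE (pvar_notin_yvars 0 c_n)) (negbTE (pvar_notin_yvars 1 c_n)) /penv !pvarK.
apply/sat_fExs; exists (fun v => r (yvar tr_size v)).
exact: (sound tr_aux_yvar tr_aux_pvar tr_aux_bound th_out chi_qf lk side_r).1 tr_r.
Qed.

End Backward.

Theorem corollary3p5 (L : lang) (K : fieldType) (T : theory L) (D : vsdef L K)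
  (C : kconf K) (M : struc L) (th : M -> M) :
  model_complete T ->
  (forall N : struc L, is_model T N -> defines_nontrivial_vs D N) ->
  kernel_configuration C ->
  model_TthC T D C th ->
  (ec_model_TthC T D C th <->
   forall (n : nat) (psi : fo_form (lang_consts L M)),
     placeholder_formula n psi ->
     (exists (N : struc L) (th' : N -> N) (h : M -> N),
        model_TthC T D C th' /\
        embedding (M := expand_theta th) (N := expand_theta th') h /\
        sat_exV_theta D th' h n psi) ->
     sat_exV_theta D th id n psi).
Proof.
(* The kernel configuration only matters through [model_TthC]. *)
move=> T_mc T_vs _ M_model; split.
  move=> M_ec n psi _ [N [th' [h [N_model [h_emb [x [xV psi_x]]]]]]].
  by apply: exV_transfer_of_ec T_mc M_ec N_model h_emb _ _ _ xV psi_x.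
move=> transfer; split=> // N th' h N_model h_emb phi e phi_ex sat_N.
have [ys [chi [phi_eq chi_qf]]] := existentialP phi_ex; subst phi.
have [[M_T [th_lin _]] [N_T [th'_lin _]]] := (M_model, N_model).
apply: (tr_exV_sound chi_qf th_lin); apply: transfer; first exact: placeholder_tr_exV.
exists N, th', h; do 2!split=> //.
apply: (tr_exV_complete chi_qf (T_vs _ N_T) th'_lin _ sat_N).
exact: embedding_vzero T_mc T_vs M_T N_T (embedding_reduct h_emb).
Qed.
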